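(* Let $S\subseteq\mathbb{R}^n$ be closed, $\bar x\in S$ and $d\in T_S(\bar x)$. Then $$N_{T_S^2(\bar x;d)}(w)\subseteq N_S(\bar x;d)\ \ \forall w\in T_S^2(\bar x;d),\qquad N_{T_S^{''}(\bar x;d)}(w)\subseteq N_S(\bar x;d)\ \ \forall w\in T_S^{''}(\bar x;d).$$
   Context: $T_S(\bar x)$ is the Bouligand tangent cone. $T_S^2(\bar x;d):=\{w\mid \exists t_k\downarrow 0,\ w_k\to w,\ \bar x+t_kd+\tfrac12 t_k^2w_k\in S\}$; $T_S^{''}(\bar x;d):=\{w\mid \exists (t_k,r_k)\downarrow(0,0),\ w_k\to w,\ t_k/r_k\to0,\ \bar x+t_kd+\tfrac12 t_kr_kw_k\in S\}$. For a closed set $A$, $\hat N_A(x)$ is the Fréchet normal cone ($\hat N_A(x)=\emptyset$ if $x\notin A$), $N_A(x)=\limsup_{x'\to_A x}\hat N_A(x')$ is the limiting normal cone. The directional limiting normal cone is $N_S(\bar x;d):=\limsup_{t\downarrow0,\,d'\to d}\hat N_S(\bar x+td')$ (Painlevé–Kuratowski outer limit). *)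

From HB Require Import structures.
From mathcomp Require Import all_boot all_order all_algebra.
From mathcomp Require Import all_classical all_reals topology normedtype sequences.
Set Implicit Arguments. Unset Strict Implicit. Unset Printing Implicit Defensive.
Import Order.TTheory GRing.Theory Num.Theory.
Import numFieldNormedType.Exports.
Local Open Scope classical_set_scope.
Local Open Scope ring_scope.

Section VarAnal.
Variables (R : realType) (n : nat).
Implicit Types (A S : set 'rV[R]_n) (x d w u v : 'rV[R]_n).

Definition dotv u v : R := \sum_(i < n) u ord0 i * v ord0 i.
Definition enorm u : R := Num.sqrt (dotv u u).

(* Frechet (regular) normal cone; empty when x is not in A *)
Definition frechet_normal A x : set 'rV[R]_n :=
  [set v | A x /\ forall eps : R, 0 < eps -> exists2 delta : R, 0 < delta &
     forall y, A y -> enorm (y - x) < delta -> dotv v (y - x) <= eps * enorm (y - x)].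

(* limiting normal cone: Painleve-Kuratowski outer limit of Frechet cones along x' ->_A x *)
Definition limiting_normal A x : set 'rV[R]_n :=
  [set v | exists (xk vk : nat -> 'rV[R]_n),
     [/\ forall k, A (xk k), xk @ \oo --> x, vk @ \oo --> v &
         forall k, frechet_normal A (xk k) (vk k)]].

Definition dir_limiting_normal S x d : set 'rV[R]_n :=
  [set v | exists (t : nat -> R) (dk vk : nat -> 'rV[R]_n),
     [/\ forall k, 0 < t k, t @ \oo --> 0, dk @ \oo --> d, vk @ \oo --> v &
         forall k, frechet_normal S (x + t k *: dk k) (vk k)]].

Definition tangent_cone S x : set 'rV[R]_n :=
  [set d | exists (t : nat -> R) (dk : nat -> 'rV[R]_n),
     [/\ forall k, 0 < t k, t @ \oo --> 0, dk @ \oo --> d &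
         forall k, S (x + t k *: dk k)]].

Definition second_tangent S x d : set 'rV[R]_n :=
  [set w | exists (t : nat -> R) (wk : nat -> 'rV[R]_n),
     [/\ forall k, 0 < t k, t @ \oo --> 0, wk @ \oo --> w &
         forall k, S (x + t k *: d + (2^-1 * t k ^+ 2) *: wk k)]].

Definition asymp_second_tangent S x d : set 'rV[R]_n :=
  [set w | exists (t r : nat -> R) (wk : nat -> 'rV[R]_n),
     [/\ forall k, 0 < t k /\ 0 < r k, t @ \oo --> 0 /\ r @ \oo --> 0,
         (fun k => t k / r k) @ \oo --> 0, wk @ \oo --> w &
         forall k, S (x + t k *: d + (2^-1 * t k * r k) *: wk k)]].

End VarAnal.

From HB Require Import structures.
From mathcomp Require Import all_boot all_order all_algebra.
From mathcomp Require Import all_classical all_reals topology normedtype sequences.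
From mathcomp Require Import ring lra.
Import Order.TTheory GRing.Theory Num.Theory.
Import numFieldNormedType.Exports.
Local Open Scope classical_set_scope.
Local Open Scope ring_scope.

(* Both second-order sets have the form C = {w | x + t_k d + tau_k w_k \in S}
   with t_k, tau_k / t_k -> 0.  Let v be a Frechet normal to C at w and
   z = w + s v for a small s > 0.  Projecting x + t_k d + tau_k z onto S and
   rescaling by tau_k gives points y_k with |z - y_k| <= |z - w_k|; they
   cluster at some y \in C with |z - y| <= s |v|, and the Frechet inequality
   at w forces (z - y) / s to be close to v.  The proximal normals
   (z - y_k) / s of S at x + t_k (d + (tau_k / t_k) y_k) are thus Frechet
   normals in directions close to d, close to v; a diagonal argument passes
   to limiting normals of C. *)

Section Euclidean.
Context {R : realType} {n : nat}.
Implicit Types (u v w : 'rV[R]_n).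
Local Notation E := (@enorm R n).

Lemma dotvC u v : dotv u v = dotv v u.
Proof. by apply: eq_bigr => i _; rewrite mulrC. Qed.

Lemma dotvDl u v w : dotv (u + v) w = dotv u w + dotv v w.
Proof. by rewrite /dotv -big_split; apply: eq_bigr => i _; rewrite mxE mulrDl. Qed.

Lemma dotvZl a u v : dotv (a *: u) v = a * dotv u v.
Proof. by rewrite /dotv mulr_sumr; apply: eq_bigr => i _; rewrite mxE mulrA. Qed.

Lemma dotvBl u v w : dotv (u - v) w = dotv u w - dotv v w.
Proof. by rewrite dotvDl -scaleN1r dotvZl mulN1r. Qed.

Lemma dotvBr u v w : dotv w (u - v) = dotv w u - dotv w v.
Proof. by rewrite dotvC dotvBl !(dotvC w). Qed.

Lemma dotvDr u v w : dotv w (u + v) = dotv w u + dotv w v.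
Proof. by rewrite dotvC dotvDl !(dotvC w). Qed.

Lemma dotvZr a u v : dotv v (a *: u) = a * dotv v u.
Proof. by rewrite dotvC dotvZl dotvC. Qed.

Lemma sqr_coord_le_dotvv u i : u ord0 i ^+ 2 <= dotv u u.
Proof.
rewrite /dotv (bigD1 i) //= -expr2 lerDl sumr_ge0 // => j _.
by rewrite -expr2 sqr_ge0.
Qed.

Lemma dotvv_ge0 u : 0 <= dotv u u.
Proof. by rewrite sumr_ge0 // => i _; rewrite -expr2 sqr_ge0. Qed.

Lemma dotvv_eq0 u : (dotv u u == 0) = (u == 0).
Proof.
apply/eqP/eqP => [u0|->]; last by rewrite /dotv big1 // => i _; rewrite mxE mul0r.
apply/rowP => i; rewrite mxE; apply/eqP; rewrite -sqrf_eq0 eq_le sqr_ge0 andbT.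
by rewrite -u0 sqr_coord_le_dotvv.
Qed.

Lemma dotvvB u v : dotv (u - v) (u - v) = dotv u u - 2 * dotv u v + dotv v v.
Proof. rewrite dotvBl !dotvBr (dotvC v u); ring. Qed.

Lemma dotvvD u v : dotv (u + v) (u + v) = dotv u u + 2 * dotv u v + dotv v v.
Proof. rewrite dotvDl !dotvDr (dotvC v u); ring. Qed.

Lemma enorm_ge0 u : 0 <= E u.
Proof. exact: sqrtr_ge0. Qed.

Lemma sqr_enorm u : E u ^+ 2 = dotv u u.
Proof. by rewrite sqr_sqrtr // dotvv_ge0. Qed.

Lemma enormZ a u : E (a *: u) = `|a| * E u.
Proof.
by rewrite /enorm dotvZl dotvZr mulrA -expr2 sqrtrM ?sqr_ge0 // sqrtr_sqr.
Qed.

Lemma enormN u : E (- u) = E u.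
Proof. by rewrite -scaleN1r enormZ normrN normr1 mul1r. Qed.

Lemma dotv_le_enormM u v : dotv u v <= E u * E v.
Proof.
have enorm_gt0 w : w != 0 -> 0 < E w.
  by move=> w0; rewrite sqrtr_gt0 lt_def dotvv_eq0 w0 dotvv_ge0.
have [->|/enorm_gt0 Eu] := eqVneq u 0.
  by rewrite /dotv big1 => [|i _]; rewrite ?mxE ?mul0r ?mulr_ge0 ?enorm_ge0.
have [->|/enorm_gt0 Ev] := eqVneq v 0.
  by rewrite /dotv big1 => [|i _]; rewrite ?mxE ?mulr0 ?mulr_ge0 ?enorm_ge0.
have := dotvv_ge0 (E v *: u - E u *: v).
rewrite dotvvB !dotvZl !dotvZr -!sqr_enorm => H.
have : 0 <= 2 * E u * E v * (E u * E v - dotv u v) by nra.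
by rewrite pmulr_rge0 ?subr_ge0 // !mulr_gt0.
Qed.

Lemma ler_enormD u v : E (u + v) <= E u + E v.
Proof.
rewrite -(ger0_norm (addr_ge0 (enorm_ge0 u) (enorm_ge0 v))) -sqrtr_sqr.
apply: ler_wsqrtr; rewrite dotvvD sqrrD !sqr_enorm.
by have := dotv_le_enormM u v; lra.
Qed.

Lemma ler_dist_enorm u v : `|E u - E v| <= E (u - v).
Proof.
have := ler_enormD (u - v) v; have := ler_enormD (v - u) u.
rewrite !subrK -[E (v - u)]enormN opprB => H1 H2; rewrite ler_norml; lra.
Qed.

(* The topology of 'rV[R]_n comes from the sup norm `|u|, while the
   definitions measure distances with the Euclidean norm E. *)
Lemma mxnorm_le_enorm u : `|u| <= E u.
Proof.
rewrite -[`|u|]/(mx_norm u) mx_normrE; apply: bigmax_le => [|[i j] _].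
  exact: enorm_ge0.
rewrite (ord1 i) -sqrtr_sqr; exact/ler_wsqrtr/sqr_coord_le_dotvv.
Qed.

Lemma enorm_le_mxnorm u : E u <= n.+1%:R * `|u|.
Proof.
rewrite -(ger0_norm (mulr_ge0 (ler0n _ n.+1) (normr_ge0 u))) -sqrtr_sqr.
apply: ler_wsqrtr; apply: (@le_trans _ _ (\sum_(i < n) `|u| ^+ 2)).
  apply: ler_sum => i _; rewrite -expr2 -real_normK ?num_real //.
  rewrite lerXn2r ?nnegrE // -[`|u|]/(mx_norm u) mx_normrE.
  exact: (le_bigmax _ (fun ij : 'I_1 * 'I_n => `|u ij.1 ij.2|) (ord0, i)).
rewrite sumr_const card_ord exprMn -[_ *+ n]mulr_natl.
apply: ler_wpM2r; first exact: sqr_ge0.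
by rewrite -natrX ler_nat expnS (leq_trans (leqnSn n)) // leq_pmulr.
Qed.

Lemma cvg_enorm (y : nat -> 'rV[R]_n) l :
  y @ \oo --> l -> (fun k => E (y k)) @ \oo --> E l.
Proof.
move=> /cvgrPdist_lt yl; apply/cvgrPdist_lt => e e0.
apply: filterS (yl _ (divr_gt0 e0 (ltr0Sn _ n))) => k lyk.
rewrite (le_lt_trans (ler_dist_enorm _ _)) // (le_lt_trans (enorm_le_mxnorm _)) //.
by rewrite mulrC -ltr_pdivlMr.
Qed.

End Euclidean.

Lemma cvg_subseq (T : topologicalType) (u : nat -> T) (l : T) (phi : nat -> nat) :
  (forall j, (j <= phi j)%N) -> u @ \oo --> l -> (u \o phi) @ \oo --> l.
Proof.
move=> phi_ge ul; apply: cvg_comp ul => P [N _ NP].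
by exists N => // j /= Nj; apply: NP; exact: leq_trans Nj (phi_ge j).
Qed.

Lemma cvg_dist_lt_harmonic (R : archiRealFieldType) (V : pseudoMetricNormedZmodType R)
    (a : nat -> V) (l : V) :
  (forall k, `|a k - l| < k.+1%:R^-1) -> a @ \oo --> l.
Proof.
move=> al; apply/cvgrPdist_lt => e e0.
have /cvgr_lt /(_ _ e0) := @cvg_harmonic R.
by apply: filterS => k ke; rewrite distrC (lt_trans (al k)).
Qed.

Lemma cvg_seq_normr_bounded {R : numFieldType} {V : normedModType R} {u : nat -> V} {l : V} :
  u @ \oo --> l -> exists M : R, forall k, `|u k| <= M.
Proof.
have PF := globally_properfilter (A := [set: nat]) (a := 0%N) I.
move=> /(cvgP l) /cvg_seq_bounded /(ex_bound u (F := globally [set: nat])).1 [M uM].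
by exists M => k; exact: uM.
Qed.

Section Compactness.
Context {R : realType} {n : nat}.
Local Notation E := (@enorm R n).

Lemma bolzano_weierstrass_rV (y : nat -> 'rV[R]_n) (M : R) :
  (forall k, `|y k| <= M) ->
  exists phi (l : 'rV[R]_n), (forall j, (j <= phi j)%N) /\ (y \o phi) @ \oo --> l.
Proof.
move=> yM.
pose A := closed_ball_ (fun x : 'rV[R]_n => `|x|) 0 M.
have A_closed : closed A by exact: closed_closed_ball_.
have A_bounded : bounded_set A.
  exists M; split; first by rewrite num_real.
  move=> M' MM' x; rewrite /A /closed_ball_ /= sub0r normrN => xM.
  by rewrite (le_trans xM) // ltW.
have yA : (y @ \oo) A.
  by exists 0%N => // k _; rewrite /A /closed_ball_ /= sub0r normrN.
have [l [_ l_cluster]] := bounded_closed_compact A_bounded A_closed _ yA.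
have near_l j : exists k, (j <= k)%N /\ `|l - y k| < j.+1%:R^-1.
  have tail_j : (y @ \oo) [set y k | k in [set k | (j <= k)%N]].
    by exists j => // k jk; exists k.
  have [_ [[k jk <-] lyk]] := l_cluster _ _ tail_j (nbhsx_ballx l _ (harmonic_gt0 j)).
  by exists k; split => //; move: lyk; rewrite -ball_normE.
have [phi phiP] := choice near_l.
exists phi, l; split; first by move=> j; case: (phiP j).
by apply: cvg_dist_lt_harmonic => k /=; rewrite distrC; case: (phiP k).
Qed.

Lemma closed_nearest_point {S : set 'rV[R]_n} {a : 'rV[R]_n} (p : 'rV[R]_n) :
  closed S -> S a ->
  exists2 q, S q & forall y, S y -> E (p - q) <= E (p - y).
Proof.
move=> S_closed Sa.
pose D := [set E (p - y) | y in S].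
have D_lb : has_lbound D by exists 0 => _ [y _ <-]; exact: enorm_ge0.
have D_inf : has_inf D by split => //; exists (E (p - a)), a.
have minimizing k : exists y, S y /\ E (p - y) < inf D + k.+1%:R^-1.
  by have [_ [y Sy <-]] := inf_adherent (harmonic_gt0 k) D_inf; exists y.
have [y /all_and2 [Sy yinf]] := choice minimizing.
have y_bounded k : `|y k| <= E p + (inf D + 1).
  rewrite (le_trans (mxnorm_le_enorm _)) // -[y k](subKr p).
  rewrite (le_trans (ler_enormD _ _)) // enormN lerD2l (le_trans (ltW (yinf k))) //.
  by rewrite lerD2l invf_le1 // ler1n.
have [phi [l [phi_ge yl]]] := bolzano_weierstrass_rV _ _ y_bounded.
exists l => [|z Sz].
  by apply: (closed_cvg _ S_closed _ _ yl); apply: nearW => k; exact: Sy.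
apply: le_trans (ge_inf D_lb (ex_intro2 _ _ z Sz erefl)).
rewrite -[leRHS]addr0; apply: (ler_cvg_to (a := \oo) (f := fun k => E (p - y (phi k)))).
- by apply: cvg_enorm; apply: cvgB => //; exact: cvg_cst.
- by apply: cvgD; [exact: cvg_cst | exact: cvg_subseq phi_ge cvg_harmonic].
- by apply: nearW => k; exact/ltW/yinf.
Qed.

End Compactness.

Section FrechetNormals.
Context {R : realType} {n : nat}.
Local Notation E := (@enorm R n).

Lemma nearest_point_frechet_normal (S : set 'rV[R]_n) (p q : 'rV[R]_n) (c : R) :
  S q -> (forall y, S y -> E (p - q) <= E (p - y)) -> 0 < c ->
  frechet_normal S q (c *: (p - q)).
Proof.
move=> Sq q_nearest c0; split=> // eps eps0.
exists (2 * eps / c) => [|y Sy]; first by rewrite !mulr_gt0 ?invr_gt0.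
rewrite ltr_pdivlMr // mulrC => cE; have Eyq := enorm_ge0 (y - q).
have dot_le : 2 * dotv (p - q) (y - q) <= E (y - q) ^+ 2.
  have := q_nearest _ Sy; rewrite -(ler_pXn2r (_ : 0 < 2)%N) ?nnegrE ?enorm_ge0 //.
  rewrite -[p - y](subrKA q) -[q - y]opprB !sqr_enorm (dotvvB (p - q)) -sqr_enorm.
  lra.
rewrite dotvZl; nra.
Qed.

Lemma frechet_normal_almost_proximal {C : set 'rV[R]_n} {w v : 'rV[R]_n} :
  frechet_normal C w v -> forall eps, 0 < eps ->
  exists2 s, 0 < s & forall y, C y -> E (w + s *: v - y) <= s * E v ->
    E (s^-1 *: (w + s *: v - y) - v) <= 2 * eps.
Proof.
move=> [_ v_normal] eps eps0; have [delta delta0 v_delta] := v_normal _ eps0.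
have Ev := enorm_ge0 v.
pose s := delta / (2 * (E v + 1)).
have s0 : 0 < s by rewrite divr_gt0 // mulr_gt0 // ltr_wpDl.
have s_small : 2 * s * E v < delta.
  have : s * (2 * (E v + 1)) = delta by rewrite divfK // mulf_neq0 // gt_eqF // ltr_wpDl.
  nra.
exists s => // y Cy.
have -> : w + s *: v - y = s *: v - (y - w) by rewrite opprB addrAC addrC.
set h := y - w; have Eh := enorm_ge0 h.
move=> close.
have h_le : dotv (s *: v - h) (s *: v - h) <= (s * E v) ^+ 2.
  rewrite -sqr_enorm lerXn2r ?nnegrE ?enorm_ge0 //; exact: mulr_ge0 (ltW s0) Ev.
rewrite dotvvB !dotvZl !dotvZr -!sqr_enorm in h_le.
have le_of_sqr_le (a b : R) : 0 <= b -> a ^+ 2 <= b * a -> a <= b by move=> *; nra.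
have h_lt : E h < delta.
  apply: le_lt_trans s_small; apply: le_of_sqr_le; first by nra.
  have : s * dotv v h <= s * (E v * E h) by rewrite ler_pM2l ?dotv_le_enormM.
  nra.
have h_eps : E h <= 2 * s * eps.
  apply: le_of_sqr_le; first by nra.
  have : s * dotv v h <= s * (eps * E h) by rewrite ler_pM2l ?v_delta.
  nra.
have -> : s^-1 *: (s *: v - h) - v = - (s^-1 *: h).
  by rewrite scalerBr scalerA mulVf ?gt_eqF // scale1r addrAC subrr add0r.
rewrite enormN enormZ gtr0_norm ?invr_gt0 // mulrC ler_pdivrMr //; nra.
Qed.

End FrechetNormals.

Definition admissible_scaling {R : realType} (A : (nat -> R) -> (nat -> R) -> Prop) :=
  [/\ forall t tau, A t tau -> forall k, 0 < t k /\ 0 < tau k,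
      forall t tau, A t tau -> t @ \oo --> 0,
      forall t tau, A t tau -> (fun k => tau k / t k) @ \oo --> 0
    & forall t tau phi, A t tau -> (forall j, (j <= phi j)%N) -> A (t \o phi) (tau \o phi)].

Section ScaledTangentSet.
Context {R : realType} {n : nat}.
Local Notation E := (@enorm R n).
Variables (S : set 'rV[R]_n) (x d : 'rV[R]_n) (A : (nat -> R) -> (nat -> R) -> Prop).
Hypothesis A_admissible : admissible_scaling A.

(* T^2_S(x; d) and T''_S(x; d) are the instances tau = t^2 / 2 and tau = t r / 2. *)
Definition scaled_tangent_set : set 'rV[R]_n :=
  [set w | exists t tau (wk : nat -> 'rV[R]_n),
    [/\ A t tau, wk @ \oo --> w & forall k, S (x + t k *: d + tau k *: wk k)]].

Lemma scaled_nearest_points (z : 'rV[R]_n) {t tau} {wk : nat -> 'rV[R]_n} :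
  closed S -> A t tau -> (forall k, S (x + t k *: d + tau k *: wk k)) ->
  exists y : nat -> 'rV[R]_n, forall k,
    [/\ S (x + t k *: d + tau k *: y k), E (z - y k) <= E (z - wk k)
      & forall c, 0 < c -> frechet_normal S (x + t k *: d + tau k *: y k) (c *: (z - y k))].
Proof.
move=> S_closed Atau Swk; have [A_gt0 _ _ _] := A_admissible.
pose p k := x + t k *: d + tau k *: z.
have nearest k : exists q, S q /\ forall y, S y -> E (p k - q) <= E (p k - y).
  by have [q ? ?] := closed_nearest_point (p k) S_closed (Swk 0%N); exists q.
have [q /all_and2 [Sq q_nearest]] := choice nearest.
exists (fun k => (tau k)^-1 *: (q k - (x + t k *: d))) => k.
have [_ tau0] := A_gt0 _ _ Atau k.
have tau_neq0 : tau k != 0 by rewrite gt_eqF.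
have -> : x + t k *: d + tau k *: ((tau k)^-1 *: (q k - (x + t k *: d))) = q k.
  by rewrite scalerA mulfV // scale1r subrKC.
have p_sub (y' : 'rV[R]_n) : p k - (x + t k *: d + tau k *: y') = tau k *: (z - y').
  by rewrite opprD addrACA subrr add0r scalerBr.
have p_q : p k - q k = tau k *: (z - (tau k)^-1 *: (q k - (x + t k *: d))).
  by rewrite -p_sub scalerA mulfV ?gt_eqF // scale1r subrKC.
split=> // [|c c0].
  by have := q_nearest k _ (Swk k); rewrite p_q p_sub !enormZ ler_pM2l ?normr_gt0.
rewrite -[c](divfK tau_neq0) -scalerA -p_q.
by apply: nearest_point_frechet_normal; [exact: Sq | exact: q_nearest | exact: divr_gt0].
Qed.

Lemma frechet_normal_scaled_tangent_approx {w v : 'rV[R]_n} : closed S ->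
  scaled_tangent_set w -> frechet_normal scaled_tangent_set w v ->
  forall eta, 0 < eta -> exists t (d' u : 'rV[R]_n),
    [/\ 0 < t, t < eta, `|d' - d| < eta, `|u - v| < eta
      & frechet_normal S (x + t *: d') u].
Proof.
move=> S_closed [t [tau [wk [Atau wkw Swk]]]] v_normal eta eta0.
have [A_gt0 A_cvg0 A_ratio_cvg0 A_subseq] := A_admissible.
have eta8 : 0 < eta / 8 by rewrite divr_gt0.
have [s s0 almost_proximal] := frechet_normal_almost_proximal v_normal _ eta8.
pose z := w + s *: v.
have [y /all_and3 [Sy y_nearest y_normal]] := scaled_nearest_points z S_closed Atau Swk.
have [M wkM] := cvg_seq_normr_bounded wkw.
have y_bounded k : `|y k| <= E z + (E z + n.+1%:R * M).
  rewrite (le_trans (mxnorm_le_enorm _)) // -[y k](subKr z).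
  rewrite (le_trans (ler_enormD _ _)) // enormN lerD2l (le_trans (y_nearest k)) //.
  rewrite (le_trans (ler_enormD _ _)) // enormN lerD2l (le_trans (enorm_le_mxnorm _)) //.
  by rewrite ler_pM2l.
have [phi [ys [phi_ge yys]]] := bolzano_weierstrass_rV _ _ y_bounded.
have ys_near_v : E (s^-1 *: (z - ys) - v) <= eta / 4.
  rewrite (le_trans (almost_proximal _ _ _)) //; last lra.
    exists (t \o phi), (tau \o phi), (y \o phi).
    by split=> [|//|k]; [exact: A_subseq _ _ _ Atau phi_ge | exact: Sy].
  have -> : s * E v = E (z - w) by rewrite addrC addKr enormZ gtr0_norm.
  apply: (ler_cvg_to (a := \oo) (f := fun k => E (z - y (phi k)))
    (g := fun k => E (z - wk (phi k)))).
  - by apply: cvg_enorm; apply: cvgB => //; exact: cvg_cst.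
  - by apply: cvg_enorm; apply: cvgB; [exact: cvg_cst | exact: cvg_subseq].
  - by apply: nearW => k; exact: y_nearest.
have dk_d : (fun k => d + (tau k / t k) *: y k) \o phi @ \oo --> d.
  rewrite -[X in _ --> X]addr0; apply: cvgD; first exact: cvg_cst.
  rewrite -(scale0r ys); apply: cvgZ => //.
  exact: cvg_subseq phi_ge (A_ratio_cvg0 _ _ Atau).
have uk_us : (fun k => s^-1 *: (z - y (phi k))) @ \oo --> s^-1 *: (z - ys).
  by apply: cvgZ; [exact: cvg_cst | apply: cvgB => //; exact: cvg_cst].
near \oo => j.
have [tj0 tauj0] := A_gt0 _ _ Atau (phi j).
exists (t (phi j)), (d + (tau (phi j) / t (phi j)) *: y (phi j)), (s^-1 *: (z - y (phi j))).
split => //.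
- by near: j; apply: cvgr_lt; [exact: cvg_subseq phi_ge (A_cvg0 _ _ Atau) | ].
- by near: j; exact: cvgr_distC_lt dk_d _ eta0.
- rewrite -(subrKA (s^-1 *: (z - ys))) (le_lt_trans (ler_normD _ _)) //.
  rewrite -(subrK (eta / 4) eta) ltr_leD ?(le_trans (mxnorm_le_enorm _)) //.
  by near: j; apply: cvgr_distC_lt uk_us _ _; lra.
- rewrite scalerDr scalerA mulrC divfK ?gt_eqF // addrA.
  by apply: y_normal; rewrite invr_gt0.
Unshelve. all: end_near. Qed.

Lemma limiting_normal_scaled_tangent w v : closed S ->
  limiting_normal scaled_tangent_set w v -> dir_limiting_normal S x d v.
Proof.
move=> S_closed [wk [vk [T_wk wkw vkv vk_normal]]].
have approx m : exists tdu : R * 'rV[R]_n * 'rV[R]_n,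
    [/\ 0 < tdu.1.1, tdu.1.1 < m.+1%:R^-1, `|tdu.1.2 - d| < m.+1%:R^-1,
      `|tdu.2 - v| < m.+1%:R^-1 & frechet_normal S (x + tdu.1.1 *: tdu.1.2) tdu.2].
  set eta := (m.+1%:R^-1 : R).
  have eta2 : 0 < eta / 2 by rewrite divr_gt0 // invr_gt0.
  have /cvgrPdistC_lt /(_ _ eta2) [N _ vkN] := vkv.
  have [t [d' [u [t0 t_lt d'd uv normal]]]] :=
    frechet_normal_scaled_tangent_approx S_closed (T_wk N) (vk_normal N) _ eta2.
  exists (t, d', u); split => //=; [lra | lra |].
  rewrite -(subrKA (vk N)) (le_lt_trans (ler_normD _ _)) //.
  by have := vkN N (leqnn N); lra.
have [tdu /all_and5 [t0 t_lt d'd uv normal]] := choice approx.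
exists (fun m => (tdu m).1.1), (fun m => (tdu m).1.2), (fun m => (tdu m).2).
split => //; apply: cvg_dist_lt_harmonic => // m.
by rewrite subr0 gtr0_norm.
Qed.

End ScaledTangentSet.

Definition second_order_scaling {R : realType} (t tau : nat -> R) :=
  [/\ forall k, 0 < t k, t @ \oo --> 0 & tau = (fun k => 2^-1 * t k ^+ 2)].

Definition asymp_second_order_scaling {R : realType} (t tau : nat -> R) :=
  exists r : nat -> R,
    [/\ forall k, 0 < t k /\ 0 < r k, t @ \oo --> 0 /\ r @ \oo --> 0,
        (fun k => t k / r k) @ \oo --> 0 & tau = (fun k => 2^-1 * t k * r k)].

Section SecondOrderTangentSets.
Context {R : realType} {n : nat}.
Variables (S : set 'rV[R]_n) (x d : 'rV[R]_n).

Lemma second_order_scaling_admissible : admissible_scaling (@second_order_scaling R).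
Proof.
split.
- by move=> t tau [t0 _ ->] k; split=> //; rewrite mulr_gt0 ?invr_gt0 ?exprn_gt0.
- by move=> t tau [].
- move=> t tau [t0 tl ->].
  have -> : (fun k => 2^-1 * t k ^+ 2 / t k) = (fun k => 2^-1 * t k).
    by apply: funext => k; rewrite expr2 mulrA mulfK ?gt_eqF.
  by rewrite -(mulr0 2^-1); apply: cvgMr.
- move=> t tau phi [t0 tl ->] phi_ge.
  by split=> // [k|]; [exact: t0 | exact: cvg_subseq].
Qed.

Lemma asymp_second_order_scaling_admissible :
  admissible_scaling (@asymp_second_order_scaling R).
Proof.
split.
- move=> t tau [r [rt0 _ _ ->]] k.
  by have [t0 r0] := rt0 k; split=> //; rewrite !mulr_gt0 ?invr_gt0.
- by move=> t tau [r [_ []]].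
- move=> t tau [r [rt0 [_ rl] _ ->]].
  have -> : (fun k => 2^-1 * t k * r k / t k) = (fun k => 2^-1 * r k).
    by apply: funext => k; have [t0 _] := rt0 k; rewrite mulrAC mulfK ?gt_eqF.
  by rewrite -(mulr0 2^-1); apply: cvgMr.
- move=> t tau phi [r [rt0 [tl rl] trl ->]] phi_ge.
  exists (r \o phi); split=> [k|||//].
  + exact: rt0.
  + by split; exact: cvg_subseq.
  + exact: cvg_subseq trl.
Qed.

Lemma second_tangentE :
  second_tangent S x d = scaled_tangent_set S x d (@second_order_scaling R).
Proof.
apply/seteqP; split=> w.
- by move=> [t [wk [t0 tl wkw Swk]]]; exists t, (fun k => 2^-1 * t k ^+ 2), wk.
- by move=> [t [_ [wk [[t0 tl ->] wkw Swk]]]]; exists t, wk.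
Qed.

Lemma asymp_second_tangentE :
  asymp_second_tangent S x d = scaled_tangent_set S x d (@asymp_second_order_scaling R).
Proof.
apply/seteqP; split=> w.
- move=> [t [r [wk [rt0 trl tr wkw Swk]]]].
  by exists t, (fun k => 2^-1 * t k * r k), wk; split=> //; exists r.
- by move=> [t [_ [wk [[r [rt0 trl tr ->]] wkw Swk]]]]; exists t, r, wk.
Qed.

End SecondOrderTangentSets.

Theorem lemma2p4 (R : realType) (n : nat) (S : set 'rV[R]_n) (xbar d : 'rV[R]_n) :
  closed S -> S xbar -> tangent_cone S xbar d ->
  (forall w, second_tangent S xbar d w ->
     limiting_normal (second_tangent S xbar d) w `<=` dir_limiting_normal S xbar d) /\
  (forall w, asymp_second_tangent S xbar d w ->
     limiting_normal (asymp_second_tangent S xbar d) w `<=` dir_limiting_normal S xbar d).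
Proof.
move=> S_closed _ _; split=> w _ v.
- rewrite second_tangentE.
  apply: limiting_normal_scaled_tangent => //; exact: second_order_scaling_admissible.
- rewrite asymp_second_tangentE.
  apply: limiting_normal_scaled_tangent => //; exact: asymp_second_order_scaling_admissible.
Qed.
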